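(* Let $M$ be a modular-magic Sudoku board. For each $j\in\{0,3,6\}$, consider the three blocks of $M$ whose center entry is $j$. Then among the three off-diagonal sets of these three blocks, at least two are equal.
   Context: A Sudoku board is a $9\times 9$ array with entries from $\{0,1,\dots,8\}$ such that every row, every column, and every one of the nine $3\times 3$ blocks (rows $3a+1,\dots,3a+3$, columns $3b+1,\dots,3b+3$, $a,b\in\{0,1,2\}$) contains each symbol exactly once. Within a block, a mini-row, mini-column, or mini-diagonal is a row, column, or one of the two diagonals of that $3\times 3$ block. A modular-magic Sudoku board is a Sudoku board in which, for every block, the sum of the entries of each mini-row, each mini-column and each of the two mini-diagonals is divisible by $9$. In every block of a modular-magic board, one of the two mini-diagonals has entry set $\{0,3,6\}$, and for each $j\in\{0,3,6\}$ exactly three blocks have center entry $j$. The off-diagonal set of a block is the set of the two corner entries of the mini-diagonal whose entries are not from $\{0,3,6\}$. *)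

From mathcomp Require Import all_boot.
Set Implicit Arguments. Unset Strict Implicit. Unset Printing Implicit Defensive.

(* A 9x9 board: rows/columns indexed by 'I_9 (row r = paper's row r+1),
   entries in {0,...,8} represented by 'I_9. *)
Definition board := 'I_9 -> 'I_9 -> 'I_9.

Definition gidx (a i : 'I_3) : 'I_9 := inord (3 * a + i).

Definition bentry (M : board) (a b i j : 'I_3) : 'I_9 := M (gidx a i) (gidx b j).

Definition is_sudoku (M : board) : Prop :=
  (forall (r : 'I_9) (s : 'I_9), #|[set c : 'I_9 | M r c == s]| = 1) /\
  (forall (c : 'I_9) (s : 'I_9), #|[set r : 'I_9 | M r c == s]| = 1) /\
  (forall (a b : 'I_3) (s : 'I_9),
      #|[set p : 'I_3 * 'I_3 | bentry M a b p.1 p.2 == s]| = 1).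

Definition i0 : 'I_3 := inord 0.
Definition i1 : 'I_3 := inord 1.
Definition i2 : 'I_3 := inord 2.

Definition sum3 (M : board) (a b : 'I_3) (c : 'I_3 -> 'I_3 * 'I_3) : nat :=
  \sum_(k < 3) (bentry M a b (c k).1 (c k).2 : nat).

Definition is_modular_magic (M : board) : Prop :=
  is_sudoku M /\
  forall a b : 'I_3,
    (forall i : 'I_3, 9 %| sum3 M a b (fun k => (i, k))) /\
    (forall j : 'I_3, 9 %| sum3 M a b (fun k => (k, j))) /\
    9 %| sum3 M a b (fun k => (k, k)) /\
    9 %| sum3 M a b (fun k => (k, rev_ord k)).

Definition in036 (x : 'I_9) : bool := (x : nat) \in [:: 0; 3; 6].

Definition center (M : board) (a b : 'I_3) : 'I_9 := bentry M a b i1 i1.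

(* The off-diagonal set of block (a,b): the two corner entries of the
   mini-diagonal whose entries are not (all) from {0,3,6}. *)
Definition offdiag (M : board) (a b : 'I_3) : {set 'I_9} :=
  if [&& in036 (bentry M a b i0 i0), in036 (bentry M a b i1 i1)
       & in036 (bentry M a b i2 i2)]
  then [set bentry M a b i0 i2; bentry M a b i2 i0]
  else [set bentry M a b i0 i0; bentry M a b i2 i2].

From mathcomp Require Import all_boot.
From mathcomp Require Import zify.

(* In a modular-magic block the four lines through the centre c sum to 36 + 3c, so 3 | c.
   Three distinct units (non-multiples of 3) below 9 never sum to 0 mod 9, so every line
   contains one of the only three multiples of 3; hence the middle row and column consist of
   c and two units, and so do the corners of the off-diagonal.  Each of these three lines
   carries a "c-pair" {u, v} of units with u + v + c = 0 mod 9, which we label by uv mod 9,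
   a value in {2, 5, 8}.  A c-pair is determined by c and its label, and two disjoint pairs
   with different centres have the same label.  So the middle-row label is constant along a
   band of blocks, the middle-column label along a stack, and no row label equals a column
   label.  For three blocks with centre j, the row labels and column labels are disjoint
   subsets of {2, 5, 8}, so one of them is a single value; the off-diagonal labels avoid it,
   two of them agree, and equal labels with equal centre give equal off-diagonal sets. *)

Lemma i0E : i0 = 0 :> nat. Proof. by rewrite /i0 inordK. Qed.
Lemma i1E : i1 = 1 :> nat. Proof. by rewrite /i1 inordK. Qed.
Lemma i2E : i2 = 2 :> nat. Proof. by rewrite /i2 inordK. Qed.

Lemma big_ord3 (F : 'I_3 -> nat) : \sum_(k < 3) F k = F i0 + F i1 + F i2.
Proof.
rewrite !big_ord_recl big_ord0 addn0 addnA.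
by congr (F _ + F _ + F _); apply: val_inj; rewrite /= ?i0E ?i1E ?i2E.
Qed.

Lemma rev_ord3 : [/\ rev_ord i0 = i2, rev_ord i1 = i1 & rev_ord i2 = i0].
Proof. by split; apply: val_inj; rewrite /= ?i0E ?i1E ?i2E. Qed.

Lemma gidxE (a i : 'I_3) : gidx a i = 3 * a + i :> nat.
Proof. by rewrite /gidx inordK //; have := ltn_ord a; have := ltn_ord i; lia. Qed.

Lemma fiber1_inj {T : finType} {U : eqType} {f : T -> U} :
  (forall s, #|[set t | f t == s]| = 1) -> injective f.
Proof.
move=> fib t t' e; have /eqP/cards1P[z fibE] := fib (f t).
have : t \in [set u | f u == f t] by rewrite inE.
have : t' \in [set u | f u == f t] by rewrite inE e.
by rewrite fibE !inE => /eqP-> /eqP->.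
Qed.

Lemma sumn_uniq_bounded n {s : seq nat} :
  uniq s -> all (gtn n) s -> size s = n -> sumn s = sumn (iota 0 n).
Proof.
move=> s_uniq /allP s_lt s_size.
have sub : {subset s <= iota 0 n} by move=> y /s_lt; rewrite mem_iota.
have le_size : size (iota 0 n) <= size s by rewrite size_iota s_size.
have [_ s_iota] := uniq_min_size s_uniq sub le_size.
by apply/perm_sumn/uniq_perm; rewrite ?iota_uniq.
Qed.

Lemma in036E (x : 'I_9) : in036 x = (3 %| x).
Proof. by case: x => [[|[|[|[|[|[|[|[|[|?]]]]]]]]]]. Qed.

Definition pair_label (u v : nat) : nat := u * v %% 9.
Definition partner (c u : nat) : nat := (18 - c - u) %% 9.

Lemma partnerE {c u v} : c < 9 -> u < 9 -> v < 9 -> 9 %| u + c + v -> v = partner c u.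
Proof. rewrite /partner; lia. Qed.

Lemma all_iota n (P : pred nat) : all P (iota 0 n) -> forall m, m < n -> P m.
Proof. by move/allP=> allP m lt_mn; apply: allP; rewrite mem_iota. Qed.

Lemma mult3_lt9 {c} : 3 %| c -> c < 9 -> c \in [:: 0; 3; 6].
Proof. rewrite !inE; lia. Qed.

Lemma line_has_mult3 {u v w} : all (gtn 9) [:: u; v; w] -> uniq [:: u; v; w] ->
  9 %| u + v + w -> [|| 3 %| u, 3 %| v | 3 %| w].
Proof. rewrite /= !inE; lia. Qed.

Lemma pair_label_range {c u v} : all (gtn 9) [:: c; u; v] -> 3 %| c -> ~~ (3 %| u) ->
  9 %| u + c + v -> pair_label u v \in [:: 2; 5; 8].
Proof.
move=> /and4P[lt_c lt_u lt_v _] c3 u3 /(partnerE lt_c lt_u lt_v) ->.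
have : all (fun u => all (fun c => ~~ (3 %| u) ==>
    (pair_label u (partner c u) \in [:: 2; 5; 8])) [:: 0; 3; 6]) (iota 0 9).
  by vm_compute.
by move/all_iota/(_ u lt_u)/allP/(_ c (mult3_lt9 c3 lt_c)); rewrite u3.
Qed.

Lemma pair_label_inj {c u v w z : 'I_9} : 3 %| c -> ~~ (3 %| u) -> ~~ (3 %| w) ->
  9 %| u + c + v -> 9 %| w + c + z -> pair_label u v = pair_label w z ->
  [set u; v] = [set w; z].
Proof.
move=> c3 u3 w3 uv wz; have lt9 := @ltn_ord 9.
have vE := partnerE (lt9 c) (lt9 u) (lt9 v) uv.
have zE := partnerE (lt9 c) (lt9 w) (lt9 z) wz.
have : all (fun c => all (fun u => all (fun w =>
    [&& ~~ (3 %| u), ~~ (3 %| w) & pair_label u (partner c u) == pair_label w (partner c w)]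
    ==> (u == w) || (u == partner c w)) (iota 0 9)) (iota 0 9)) [:: 0; 3; 6].
  by vm_compute.
move/allP/(_ _ (mult3_lt9 c3 (lt9 c)))/all_iota/(_ _ (lt9 u))/all_iota/(_ _ (lt9 w)).
rewrite u3 w3 /= -vE -zE => /implyP uw /eqP/uw /orP[] /eqP uE.
  have -> : u = w by apply: ord_inj.
  by have -> : v = z by apply: ord_inj; rewrite vE zE uE.
have -> : u = z by apply: ord_inj; rewrite uE.
have -> : v = w by apply: ord_inj; move: uv wz; rewrite uE; have := lt9 v; have := lt9 w; lia.
by rewrite setUC.
Qed.

Lemma disjoint_pairs_label_neq {c u v w z : 'I_9} : 3 %| c -> ~~ (3 %| u) -> ~~ (3 %| w) ->
  9 %| u + c + v -> 9 %| w + c + z -> u != w :> nat -> u != z :> nat ->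
  pair_label u v != pair_label w z.
Proof.
move=> c3 u3 w3 uv wz uw uz; apply/eqP => /(pair_label_inj c3 u3 w3 uv wz) uv_wz.
have : u \in [set w; z] by rewrite -uv_wz set21.
by case/set2P => eq_u; [move: uw | move: uz]; rewrite eq_u eqxx.
Qed.

Lemma disjoint_pairs_label_eq {c u v c' u' v'} :
  all (gtn 9) [:: c; u; v; c'; u'; v'] -> 3 %| c -> 3 %| c' ->
  9 %| u + c + v -> 9 %| u' + c' + v' -> uniq [:: c; u; v; c'; u'; v'] ->
  pair_label u v = pair_label u' v'.
Proof.
case/and3P=> lt_c lt_u /and3P[lt_v lt_c' /and3P[lt_u' lt_v' _]] c3 c'3.
move=> /(partnerE lt_c lt_u lt_v) -> /(partnerE lt_c' lt_u' lt_v') ->.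
have : all (fun c => all (fun u => all (fun c' => all (fun u' =>
    uniq [:: c; u; partner c u; c'; u'; partner c' u'] ==>
    (pair_label u (partner c u) == pair_label u' (partner c' u')))
    (iota 0 9)) [:: 0; 3; 6]) (iota 0 9)) [:: 0; 3; 6].
  by vm_compute.
move/allP/(_ _ (mult3_lt9 c3 lt_c))/all_iota/(_ _ lt_u).
by move/allP/(_ _ (mult3_lt9 c'3 lt_c'))/all_iota/(_ _ lt_u') => /implyP uv /uv /eqP.
Qed.

Lemma labels_pigeonhole (e x y z : nat) : all (fun l => l \in [:: 2; 5; 8]) [:: e; x; y; z] ->
  [&& x != e, y != e & z != e] -> [|| x == y, x == z | y == z].
Proof. rewrite /= !inE; lia. Qed.

Lemma label_forced (r r' g : nat) : all (fun l => l \in [:: 2; 5; 8]) [:: r; r'; g] ->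
  r' != r -> r != g -> r' != g -> g = 15 - r - r'.
Proof. rewrite /= !inE; lia. Qed.

Lemma cross_distinct_constant (r1 r2 r3 g1 g2 g3 : nat) :
  all (fun l => l \in [:: 2; 5; 8]) [:: r1; r2; r3; g1; g2; g3] ->
  all (fun r => all (fun g => r != g) [:: g1; g2; g3]) [:: r1; r2; r3] ->
  (r2 == r1) && (r3 == r1) || (g2 == g1) && (g3 == g1).
Proof.
rewrite /= !andbT => /and5P[lr1 lr2 lr3 lg1 /andP[lg2 lg3]].
case/and3P=> /and3P[r1g1 r1g2 r1g3] /and3P[r2g1 r2g2 r2g3] /and3P[r3g1 r3g2 r3g3].
have [//|] := boolP ((r2 == r1) && (r3 == r1)).
have forced (r g : nat) : r \in [:: 2; 5; 8] -> r != r1 -> g \in [:: 2; 5; 8] ->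
    r1 != g -> r != g -> g = 15 - r1 - r.
  by move=> lr rr1 lg r1g rg; apply: label_forced; rewrite //= lr1 lr lg.
rewrite negb_and => /orP[r21 | r31].
  by rewrite (forced r2 g1) // (forced r2 g2) // (forced r2 g3) // eqxx.
by rewrite (forced r3 g1) // (forced r3 g2) // (forced r3 g3) // eqxx.
Qed.

Lemma offdiag_labels_collide {r1 r2 r3 g1 g2 g3 d1 d2 d3 : nat} :
  [&& d1 != r1, d1 != g1, d2 != r2, d2 != g2, d3 != r3 & d3 != g3] ->
  all (fun l => l \in [:: 2; 5; 8]) [:: r1; r2; r3; g1; g2; g3; d1; d2; d3] ->
  all (fun r => all (fun g => r != g) [:: g1; g2; g3]) [:: r1; r2; r3] ->
  [|| d1 == d2, d1 == d3 | d2 == d3].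
Proof.
case/and5P=> d1r1 d1g1 d2r2 d2g2 /andP[d3r3 d3g3].
rewrite [all _ _]/= !andbT => /and5P[lr1 lr2 lr3 lg1 /and5P[lg2 lg3 ld1 ld2 ld3]] rg.
have : (r2 == r1) && (r3 == r1) || (g2 == g1) && (g3 == g1).
  by apply: cross_distinct_constant; rewrite //= lr1 lr2 lr3 lg1 lg2 lg3.
case/orP=> /andP[/eqP e2 /eqP e3].
  apply: (labels_pigeonhole r1); rewrite /= ?lr1 ?ld1 ?ld2 ?ld3 //.
  by rewrite d1r1 -{1}e2 d2r2 -{1}e3 d3r3.
apply: (labels_pigeonhole g1); rewrite /= ?lg1 ?ld1 ?ld2 ?ld3 //.
by rewrite d1g1 -{1}e2 d2g2 -{1}e3 d3g3.
Qed.

Lemma count_mult3_le3 {s : seq nat} : uniq s -> all (gtn 9) s -> count (dvdn 3) s <= 3.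
Proof.
move=> s_uniq /allP s_lt; rewrite -size_filter.
have sub : {subset filter (dvdn 3) s <= [:: 0; 3; 6]}.
  by move=> y; rewrite mem_filter => /andP[y3 /s_lt]; rewrite !inE; lia.
exact: uniq_leq_size (filter_uniq _ s_uniq) sub.
Qed.

Definition row_label (M : board) (a b : 'I_3) : nat :=
  pair_label (bentry M a b i1 i0) (bentry M a b i1 i2).

Definition col_label (M : board) (a b : 'I_3) : nat :=
  pair_label (bentry M a b i0 i1) (bentry M a b i2 i1).

Section Block.

Context {M : board} (HM : is_modular_magic M) (a b : 'I_3).

Local Notation x := (bentry M a b).

Lemma sum3E c : sum3 M a b c = x (c i0).1 (c i0).2 + x (c i1).1 (c i1).2 + x (c i2).1 (c i2).2.
Proof. exact: big_ord3. Qed.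

Lemma block_lines :
  [/\ forall i, 9 %| x i i0 + x i i1 + x i i2,
      forall j, 9 %| x i0 j + x i1 j + x i2 j,
      9 %| x i0 i0 + x i1 i1 + x i2 i2 &
      9 %| x i0 i2 + x i1 i1 + x i2 i0].
Proof.
have [_ /(_ a b)[rows [cols [diag anti]]]] := HM.
have [rev0 rev1 rev2] := rev_ord3.
split=> [i | j ||]; [move: (rows i) | move: (cols j) | move: diag | move: anti];
  by rewrite sum3E /= ?rev0 ?rev1 ?rev2.
Qed.

Lemma entries_uniq (s : seq ('I_3 * 'I_3)) :
  uniq [seq 3 * p.1 + p.2 | p : 'I_3 * 'I_3 <- s] -> uniq [seq x p.1 p.2 : nat | p <- s].
Proof.
have [[_ [_ blocks]] _] := HM.
move/map_uniq; rewrite map_inj_uniq // => p q /val_inj.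
by move/(fiber1_inj (blocks a b)).
Qed.

Lemma block_uniq : uniq [:: x i0 i0 : nat; x i0 i1 : nat; x i0 i2 : nat;
  x i1 i0 : nat; x i1 i1 : nat; x i1 i2 : nat; x i2 i0 : nat; x i2 i1 : nat; x i2 i2 : nat].
Proof.
have := entries_uniq [:: (i0, i0); (i0, i1); (i0, i2); (i1, i0); (i1, i1);
                         (i1, i2); (i2, i0); (i2, i1); (i2, i2)].
by rewrite /= !i0E !i1E !i2E => /(_ isT).
Qed.

Lemma block_sum : x i0 i0 + x i0 i1 + x i0 i2 + x i1 i0 + x i1 i1 + x i1 i2
  + x i2 i0 + x i2 i1 + x i2 i2 = 36.
Proof.
have := sumn_uniq_bounded 9 block_uniq; rewrite /= !ltn_ord /= => /(_ isT erefl).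
lia.
Qed.

Lemma block_mult3_count : (3 %| x i0 i0) + (3 %| x i0 i1) + (3 %| x i0 i2)
  + (3 %| x i1 i0) + (3 %| x i1 i1) + (3 %| x i1 i2)
  + (3 %| x i2 i0) + (3 %| x i2 i1) + (3 %| x i2 i2) <= 3.
Proof.
have := count_mult3_le3 block_uniq; rewrite /= !ltn_ord /= => /(_ isT).
by rewrite !addnA addn0.
Qed.

Lemma center_mult3 : 3 %| x i1 i1.
Proof.
have [rows cols diag anti] := block_lines.
move: (rows i1) (cols i1) diag anti block_sum; lia.
Qed.

Lemma mid_row_unit : ~~ (3 %| x i1 i0).
Proof.
apply/negP => m10; have [rows _ _ _] := block_lines; have m11 := center_mult3.
have m12 : 3 %| x i1 i2 by move: (rows i1); lia.
have row0_uniq : uniq [:: x i0 i0 : nat; x i0 i1 : nat; x i0 i2 : nat].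
  by apply: (entries_uniq [:: (i0, i0); (i0, i1); (i0, i2)]); rewrite /= !i0E !i1E !i2E.
have := line_has_mult3 _ row0_uniq (rows i0); rewrite /= !ltn_ord => /(_ isT).
move: block_mult3_count; rewrite m10 m11 m12; lia.
Qed.

Lemma mid_col_unit : ~~ (3 %| x i0 i1).
Proof.
apply/negP => m01; have [_ cols _ _] := block_lines; have m11 := center_mult3.
have m21 : 3 %| x i2 i1 by move: (cols i1); lia.
have col0_uniq : uniq [:: x i0 i0 : nat; x i1 i0 : nat; x i2 i0 : nat].
  by apply: (entries_uniq [:: (i0, i0); (i1, i0); (i2, i0)]); rewrite /= !i0E !i1E !i2E.
have := line_has_mult3 _ col0_uniq (cols i0); rewrite /= !ltn_ord => /(_ isT).
move: block_mult3_count; rewrite m01 m11 m21; lia.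
Qed.

Lemma offdiag_pair : exists u v : 'I_9, [/\ offdiag M a b = [set u; v], ~~ (3 %| u),
  9 %| u + center M a b + v &
  uniq [:: u : nat; v : nat; x i1 i0 : nat; x i1 i2 : nat; x i0 i1 : nat; x i2 i1 : nat]].
Proof.
have [_ _ diag anti] := block_lines; have m11 := center_mult3.
rewrite /offdiag /center !in036E.
case: ifP => [/and3P[m00 _ m22] | main].
  exists (x i0 i2), (x i2 i0); split=> //.
    by apply/negP => m02; move: block_mult3_count; rewrite m00 m11 m22 m02; lia.
  apply: (entries_uniq [:: (i0, i2); (i2, i0); (i1, i0); (i1, i2); (i0, i1); (i2, i1)]).
  by rewrite /= !i0E !i1E !i2E.
exists (x i0 i0), (x i2 i2); split=> //.
  apply/negP => m00; have m22 : 3 %| x i2 i2 by move: diag; lia.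
  by rewrite m00 m11 m22 in main.
apply: (entries_uniq [:: (i0, i0); (i2, i2); (i1, i0); (i1, i2); (i0, i1); (i2, i1)]).
by rewrite /= !i0E !i1E !i2E.
Qed.

Lemma offdiag_label : exists u v : 'I_9, [/\ offdiag M a b = [set u; v],
  ~~ (3 %| u), 9 %| u + center M a b + v,
  pair_label u v \in [:: 2; 5; 8] &
  (pair_label u v != row_label M a b) && (pair_label u v != col_label M a b)].
Proof.
have [u [v [offE u3 uv]]] := offdiag_pair.
rewrite /= !inE => /and5P[/norP[_ /norP[u10 /norP[u12 /norP[u01 u21]]]] _ _ _ _].
have [rows cols _ _] := block_lines; have m11 := center_mult3.
exists u, v; split=> //.
  by apply: (pair_label_range _ m11 u3 uv); rewrite /= !ltn_ord.
by rewrite (disjoint_pairs_label_neq m11 u3 mid_row_unit uv (rows i1))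
  ?(disjoint_pairs_label_neq m11 u3 mid_col_unit uv (cols i1)).
Qed.

Lemma row_label_range : row_label M a b \in [:: 2; 5; 8].
Proof.
have [rows _ _ _] := block_lines.
by apply: (pair_label_range _ center_mult3 mid_row_unit (rows i1)); rewrite /= !ltn_ord.
Qed.

Lemma col_label_range : col_label M a b \in [:: 2; 5; 8].
Proof.
have [_ cols _ _] := block_lines.
by apply: (pair_label_range _ center_mult3 mid_col_unit (cols i1)); rewrite /= !ltn_ord.
Qed.

Lemma row_col_label_neq : row_label M a b != col_label M a b.
Proof.
have [rows cols _ _] := block_lines.
have : uniq [:: x i1 i0 : nat; x i0 i1 : nat; x i2 i1 : nat].
  by apply: (entries_uniq [:: (i1, i0); (i0, i1); (i2, i1)]); rewrite /= !i0E !i1E !i2E.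
rewrite /= !inE => /and3P[/norP[n01 n21] _ _].
exact: (disjoint_pairs_label_neq center_mult3 mid_row_unit mid_col_unit (rows i1) (cols i1) n01 n21).
Qed.

End Block.

Lemma segments_uniq (f : 'I_9 -> 'I_9) (b b' : 'I_3) : injective f -> b != b' ->
  uniq [:: f (gidx b i1) : nat; f (gidx b i0) : nat; f (gidx b i2) : nat;
           f (gidx b' i1) : nat; f (gidx b' i0) : nat; f (gidx b' i2) : nat].
Proof.
move=> f_inj neq_bb'.
have : uniq [seq (f k : nat) | k <- [:: gidx b i1; gidx b i0; gidx b i2;
                                       gidx b' i1; gidx b' i0; gidx b' i2]].
  rewrite map_inj_uniq => [|k k' /val_inj /f_inj //].
  apply: (map_uniq (f := val)); rewrite /= !gidxE !i0E !i1E !i2E /= !inE.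
  have : (b : nat) != b' by []; lia.
by [].
Qed.

Lemma row_label_const {M} (HM : is_modular_magic M) a b b' : row_label M a b = row_label M a b'.
Proof.
have [-> // | neq_bb'] := eqVneq b b'.
have [[rows_fib _] _] := HM.
have [rows _ _ _] := block_lines HM a b; have [rows' _ _ _] := block_lines HM a b'.
apply: (disjoint_pairs_label_eq _ (center_mult3 HM a b) (center_mult3 HM a b') (rows i1) (rows' i1)).
  by rewrite /= !ltn_ord.
exact: segments_uniq (fiber1_inj (rows_fib (gidx a i1))) neq_bb'.
Qed.

Lemma col_label_const {M} (HM : is_modular_magic M) a a' b : col_label M a b = col_label M a' b.
Proof.
have [-> // | neq_aa'] := eqVneq a a'.
have [[_ [cols_fib _]] _] := HM.
have [_ cols _ _] := block_lines HM a b; have [_ cols' _ _] := block_lines HM a' b.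
apply: (disjoint_pairs_label_eq _ (center_mult3 HM a b) (center_mult3 HM a' b) (cols i1) (cols' i1)).
  by rewrite /= !ltn_ord.
exact: segments_uniq (fiber1_inj (cols_fib (gidx b i1))) neq_aa'.
Qed.

Theorem lemma2p1 (M : board) :
  is_modular_magic M ->
  forall j : 'I_9, in036 j ->
  forall B1 B2 B3 : 'I_3 * 'I_3,
    B1 != B2 -> B1 != B3 -> B2 != B3 ->
    center M B1.1 B1.2 = j -> center M B2.1 B2.2 = j -> center M B3.1 B3.2 = j ->
    offdiag M B1.1 B1.2 = offdiag M B2.1 B2.2 \/
    offdiag M B1.1 B1.2 = offdiag M B3.1 B3.2 \/
    offdiag M B2.1 B2.2 = offdiag M B3.1 B3.2.
Proof.
move=> HM j; rewrite in036E => j3 [a1 b1] [a2 b2] [a3 b3] _ _ _ /= C1 C2 C3.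
have cross a b a' b' : row_label M a b != col_label M a' b'.
  by rewrite (row_label_const HM a b b') (col_label_const HM a' a b') row_col_label_neq.
have [u1 [v1 [-> u1_3 S1 L1 /andP[R1 G1]]]] := offdiag_label HM a1 b1.
have [u2 [v2 [-> u2_3 S2 L2 /andP[R2 G2]]]] := offdiag_label HM a2 b2.
have [u3 [v3 [-> u3_3 S3 L3 /andP[R3 G3]]]] := offdiag_label HM a3 b3.
rewrite C1 in S1; rewrite C2 in S2; rewrite C3 in S3.
have d_avoid : [&& pair_label u1 v1 != row_label M a1 b1, pair_label u1 v1 != col_label M a1 b1,
    pair_label u2 v2 != row_label M a2 b2, pair_label u2 v2 != col_label M a2 b2,
    pair_label u3 v3 != row_label M a3 b3 & pair_label u3 v3 != col_label M a3 b3].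
  by rewrite R1 G1 R2 G2 R3 G3.
have := offdiag_labels_collide d_avoid.
rewrite /= L1 L2 L3 !(row_label_range HM) !(col_label_range HM) !cross => /(_ isT isT) /or3P[].
- by move/eqP/(pair_label_inj j3 u1_3 u2_3 S1 S2); left.
- by move/eqP/(pair_label_inj j3 u1_3 u3_3 S1 S3); right; left.
by move/eqP/(pair_label_inj j3 u2_3 u3_3 S2 S3); right; right.
Qed.
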